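(* Let $(X,\Sigma)$ be a random pair valued in $\mathcal{X}\times\mathfrak{S}_n$. Suppose that $P_x\in\mathcal{T}$ for all $x\in\mathcal{X}$ and that $H=\inf_{x\in\mathcal{X}}\min_{i<j}|p_{i,j}(x)-1/2|>0$. Let $s:\mathcal{X}\to\mathfrak{S}_n$ be measurable and set $$Z(s)=\sum_{i<j}\mathbb{I}\{(\Sigma(i)-\Sigma(j))(s(X)(i)-s(X)(j))<0\}-\sum_{i<j}\mathbb{I}\{(\Sigma(i)-\Sigma(j))(\sigma^*_{P_X}(i)-\sigma^*_{P_X}(j))<0\}.$$ Then $$\mathrm{Var}(Z(s))\le\Big(\frac{n(n-1)}{2H}\Big)\times(\mathcal{R}(s)-\mathcal{R}^* ).$$
   Context: $\mathfrak{S}_n$ is the set of permutations of $\{1,\dots,n\}$. The Kendall $\tau$ distance is $d_\tau(\sigma,\sigma')=\sum_{i<j}\mathbb{I}\{(\sigma(i)-\sigma(j))(\sigma'(i)-\sigma'(j))<0\}$. Conditional objects: $P_x$ is the conditional law of $\Sigma$ given $X=x$, and $p_{i,j}(x)=\mathbb{P}\{\Sigma(i)<\Sigma(j)\mid X=x\}$. $\mathcal{T}$ is the set of distributions $P$ on $\mathfrak{S}_n$ whose pairwise probabilities $p_{i,j}=\mathbb{P}_{\Sigma\sim P}\{\Sigma(i)<\Sigma(j)\}$ satisfy (a) $p_{i,j}\ge1/2$ and $p_{j,k}\ge1/2$ imply $p_{i,k}\ge1/2$, and (b) $p_{i,j}\ne1/2$ for $i<j$. For $P\in\mathcal{T}$,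 $\sigma^*_P(i)=1+\sum_{k\ne i}\mathbb{I}\{p_{i,k}<1/2\}$ is the unique Kemeny median, i.e. the unique minimizer of $\sigma\mapsto\mathbb{E}_{\Sigma\sim P}[d_\tau(\Sigma,\sigma)]$. The risk is $\mathcal{R}(s)=\mathbb{E}[d_\tau(s(X),\Sigma)]$, and $\mathcal{R}^*$ is its infimum over measurable rules $\mathcal{X}\to\mathfrak{S}_n$. *)

From HB Require Import structures.
From mathcomp Require Import all_boot all_order all_algebra all_fingroup.
From mathcomp Require Import all_classical all_reals all_analysis.
Set Implicit Arguments. Unset Strict Implicit. Unset Printing Implicit Defensive.
Import Order.TTheory GRing.Theory Num.Theory.
Local Open Scope ring_scope.
Local Open Scope classical_set_scope.

Definition discord (n : nat) (f g : 'I_n -> nat) : nat :=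
  \sum_(i < n) \sum_(j < n | (i < j)%N)
     (((f i)%:Z - (f j)%:Z) * ((g i)%:Z - (g j)%:Z) < 0)%R.

(* Kendall tau distance on S_n ('S_n = {perm 'I_n}, ranks are 0-based,
   which does not change any difference sigma(i) - sigma(j)). *)
Definition kendall (n : nat) (s s' : 'S_n) : nat :=
  discord (fun i => nat_of_ord (s i)) (fun i => nat_of_ord (s' i)).

(* A conditional law x |-> P_x is given by its probability mass function
   P x : 'S_n -> R.  Pairwise probabilities p_{i,j}(x). *)
Definition pairp (R : realType) (T : Type) (n : nat) (P : T -> 'S_n -> R)
  (x : T) (i j : 'I_n) : R :=
  \sum_(s : 'S_n) P x s * ((s i < s j)%N)%:R.

Definition in_T (R : realType) (n : nat) (p : 'I_n -> 'I_n -> R) : Prop :=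
  (forall i j k : 'I_n, i != j -> j != k -> i != k ->
     1/2 <= p i j -> 1/2 <= p j k -> 1/2 <= p i k) /\
  (forall i j : 'I_n, (i < j)%N -> p i j != 1/2).

Definition kemeny_star (R : realType) (n : nat) (p : 'I_n -> 'I_n -> R)
  (i : 'I_n) : nat :=
  (1 + \sum_(k < n | k != i) nat_of_bool (p i k < 1/2)%R)%N.

(* Expectation of f(X, Sigma) when X ~ mu and Sigma | X = x ~ P x. *)
Definition Exp (d : measure_display) (T : measurableType d) (R : realType)
  (n : nat) (mu : probability T R) (P : T -> 'S_n -> R)
  (f : T -> 'S_n -> R) : R :=
  Rintegral mu setT (fun x => \sum_(s : 'S_n) P x s * f x s).

Definition Var (d : measure_display) (T : measurableType d) (R : realType)
  (n : nat) (mu : probability T R) (P : T -> 'S_n -> R)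
  (f : T -> 'S_n -> R) : R :=
  Exp mu P (fun x s => (f x s - Exp mu P f) ^+ 2).

(* Measurability of a ranking rule s : T -> S_n (S_n discrete). *)
Definition measurable_rule (d : measure_display) (T : measurableType d)
  (n : nat) (r : T -> 'S_n) : Prop :=
  forall s : 'S_n, measurable (r @^-1` [set s]).

Definition risk (d : measure_display) (T : measurableType d) (R : realType)
  (n : nat) (mu : probability T R) (P : T -> 'S_n -> R) (r : T -> 'S_n) : R :=
  Exp mu P (fun x s => (kendall (r x) s)%:R).

Definition risk_star (d : measure_display) (T : measurableType d)
  (R : realType) (n : nat) (mu : probability T R) (P : T -> 'S_n -> R) : R :=
  inf [set risk mu P r | r in [set r : T -> 'S_n | measurable_rule r]].

Definition Hmargin (R : realType) (T : Type) (n : nat) (P : T -> 'S_n -> R) : R :=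
  inf [set r : R | exists x (i j : 'I_n), (i < j)%N /\
                     r = `|pairp P x i j - 1/2|].

Definition Zs (R : realType) (T : Type) (n : nat) (P : T -> 'S_n -> R)
  (r : T -> 'S_n) (x : T) (sg : 'S_n) : R :=
  (discord (fun i => nat_of_ord (sg i)) (fun i => nat_of_ord (r x i)))%:R -
  (discord (fun i => nat_of_ord (sg i)) (kemeny_star (pairp P x)))%:R.

From HB Require Import structures.
From mathcomp Require Import all_boot all_order all_algebra all_fingroup.
From mathcomp Require Import all_classical all_reals all_analysis.
From mathcomp Require Import lra ring.
Import Order.TTheory GRing.Theory Num.Theory.
Set Implicit Arguments. Unset Strict Implicit. Unset Printing Implicit Defensive.
Local Open Scope ring_scope.
Local Open Scope classical_set_scope.

(** Conditionally on [X = x], let [c_ij] say that [s(x)] and the Kemeny median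
    [σ*_x] disagree on the pair [{i, j}] and [b_ij] that [Σ] and [σ*_x] do.  Then
    [Z = Σ_{i<j} c_ij (1 - 2 b_ij)], so [|Z| <= D := d_τ(s(x), σ*_x) <= n(n-1)],
    while [P(b_ij | X = x) = 1/2 - |p_ij(x) - 1/2|] gives
    [E[Z | X = x] = Σ_{i<j} c_ij 2|p_ij(x) - 1/2| >= 2 H D].  Hence
    [E[Z^2 | X = x] <= D^2 <= n(n-1)/(2H) E[Z | X = x]].  Integrating, with
    [m] the median rule [x |-> σ*_x],
    [Var Z <= E[Z^2] <= n(n-1)/(2H) (R(s) - R(m)) <= n(n-1)/(2H) (R(s) - R^* )].
    The rule [m] is admissible in the infimum defining [R^* ] because it depends
    on [x] only through the finitely many signs of [p_ij(x) - 1/2]. *)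

Local Notation ranks s := (fun i => nat_of_ord (s i)).

Definition discordant (n : nat) (f g : 'I_n -> nat) (i j : 'I_n) : bool :=
  (f i < f j)%N != (g i < g j)%N.

Lemma mul_subz_lt0 (a b c e : nat) : a != b -> c != e ->
  ((a%:Z - b%:Z) * (c%:Z - e%:Z) < 0) = ((a < b)%N != (c < e)%N).
Proof.
move=> ab ce; rewrite neq0_mulr_lt0 ?subr_eq0 ?eqz_nat // !subr_lt0 !ltz_nat.
by case: (a < b)%N; case: (c < e)%N.
Qed.

Lemma ranks_inj (n : nat) (s : 'S_n) : injective (ranks s).
Proof. by move=> i j /val_inj/perm_inj. Qed.
Arguments ranks_inj {n} s.

Lemma ranks_neq (n : nat) (s : 'S_n) (i j : 'I_n) : i != j -> nat_of_ord (s i) != s j.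
Proof. by rewrite (inj_eq (ranks_inj s)). Qed.

Lemma ord_ltn_neq (n : nat) (i j : 'I_n) : (i < j)%N -> i != j.
Proof. by rewrite -val_eqE => /ltn_eqF ->. Qed.

Section Discord.
Variable n : nat.
Implicit Types f g : 'I_n -> nat.

Lemma discordE f g : injective f -> injective g ->
  discord f g = (\sum_(i < n) \sum_(j < n | (i < j)%N) discordant f g i j)%N.
Proof.
move=> f_inj g_inj; rewrite /discord; apply: eq_bigr => i _; apply: eq_bigr => j.
move=> /ord_ltn_neq ij.
by rewrite mul_subz_lt0 // ?(inj_eq f_inj) ?(inj_eq g_inj).
Qed.

Lemma discordC f g : discord f g = discord g f.
Proof. by apply: eq_bigr => i _; apply: eq_bigr => j _; rewrite mulrC. Qed.

Lemma discord_addl f g k : discord f (fun i => k + g i)%N = discord f g.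
Proof.
apply: eq_bigr => i _; apply: eq_bigr => j _.
by rewrite !PoszD opprD addrACA subrr add0r.
Qed.

Lemma discord_le f g : (discord f g <= n * (n - 1))%N.
Proof.
apply: (@leq_trans (\sum_(i < n) (n - 1))%N); last by rewrite sum_nat_const card_ord.
apply: leq_sum => i _.
apply: (@leq_trans (\sum_(j < n | j != i) 1)%N); last first.
  by rewrite sum1_card cardC1 card_ord subn1.
rewrite big_mkcond [leqRHS]big_mkcond /=; apply: leq_sum => j _.
by case: ltnP => // /gtn_eqF; rewrite val_eqE => ->; case: (_ < 0).
Qed.

End Discord.

Definition lt_half_mx (R : realType) (n : nat) (p : 'I_n -> 'I_n -> R) :
  {ffun 'I_n * 'I_n -> bool} := [ffun ik => p ik.1 ik.2 < 1/2].

Definition ahead_count (n : nat) (B : {ffun 'I_n * 'I_n -> bool}) (i : 'I_n) : nat :=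
  (\sum_(k < n | k != i) B (i, k))%N.

Lemma kemeny_star_lt_half_mx (R : realType) (n : nat) (p : 'I_n -> 'I_n -> R) :
  kemeny_star p = fun i => (1 + ahead_count (lt_half_mx p) i)%N.
Proof.
by apply: funext => i; congr (1 + _)%N; apply: eq_bigr => k _; rewrite ffunE.
Qed.

(* Falls back to the identity when [g] is not injective. *)
Definition perm_of (n : nat) (g : 'I_n -> 'I_n) : 'S_n :=
  if injectiveP g is ReflectT g_inj then perm g_inj else 1%g.

Lemma perm_ofE (n : nat) (g : 'I_n -> 'I_n) : injective g -> perm_of g =1 g.
Proof. by rewrite /perm_of; case: injectiveP => // g_inj _ i; rewrite permE. Qed.

Definition median_perm (n : nat) (B : {ffun 'I_n * 'I_n -> bool}) : 'S_n :=
  perm_of (fun i => insubd i (ahead_count B i)).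

Definition median_rule (R : realType) (T : Type) (n : nat) (P : T -> 'S_n -> R)
  (x : T) : 'S_n := median_perm (lt_half_mx (pairp P x)).

Definition cond_exp (R : realType) (T : Type) (n : nat) (P : T -> 'S_n -> R)
  (f : T -> 'S_n -> R) (x : T) : R := \sum_(s : 'S_n) P x s * f x s.

Section KemenyMedian.
Variables (R : realType) (T : Type) (n : nat) (P : T -> 'S_n -> R) (x : T).
Hypothesis P_sum1 : \sum_(s : 'S_n) P x s = 1.
Local Notation p := (pairp P x).
Local Notation ks := (kemeny_star (pairp P x)).

Lemma pairpC (i j : 'I_n) : i != j -> p i j + p j i = 1.
Proof.
move=> ij; rewrite /pairp -big_split /= -[RHS]P_sum1; apply: eq_bigr => s _.
rewrite -mulrDr -natrD.
by have := ranks_neq s ij; case: ltngtP => //= _ _; rewrite mulr1.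
Qed.

Lemma pairp_not_lt (i j : 'I_n) : i != j ->
  \sum_(s : 'S_n) P x s * (~~ (s i < s j)%N)%:R = p j i.
Proof.
move=> ij; apply: eq_bigr => s _; congr (_ * _%:R).
by have := ranks_neq s ij; case: ltngtP.
Qed.

Hypothesis P_T : in_T p.

Lemma pairp_neq_half (i j : 'I_n) : i != j -> p i j != 1/2.
Proof.
move=> ij; case: (ltngtP i j) => [lt|gt|/val_inj eq]; first exact: P_T.2.
- have sum1 := pairpC ij; move: (P_T.2 _ _ gt); apply: contra_neq => pij; lra.
- by rewrite eq eqxx in ij.
Qed.

Lemma pairp_gt_halfC (i j : 'I_n) : i != j -> (1/2 < p j i) = ~~ (1/2 < p i j).
Proof.
move=> ij; have sum1 := pairpC ij; rewrite -leNgt.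
have : (p i j < 1/2) || (1/2 < p i j) by rewrite -neq_lt pairp_neq_half.
by case/orP => ?; apply/idP/idP => ?; lra.
Qed.

Let ahead (i : 'I_n) : {set 'I_n} := [set k | (k != i) && (p i k < 1/2)].

Lemma kemeny_star_card (i : 'I_n) : ks i = #|ahead i|.+1.
Proof.
rewrite /kemeny_star add1n cardsE -sum1_card big_mkcondr /=.
by congr _.+1; apply: eq_bigr => k _; case: (_ < _).
Qed.

Lemma kemeny_star_lt (i j : 'I_n) : i != j -> 1/2 < p i j -> (ks i < ks j)%N.
Proof.
move=> ij pij; rewrite !kemeny_star_card ltnS; apply: proper_card; apply/properP; split.
  apply/fintype.subsetP => k; rewrite !inE => /andP[ki pik].
  have kj : k != j by apply: contraTneq pik => ->; rewrite -leNgt ltW.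
  rewrite kj ltNge /=; apply/negP => pjk.
  have := P_T.1 i j k ij; rewrite [j == k]eq_sym [i == k]eq_sym kj ki.
  by move=> /(_ isT isT (ltW pij) pjk); lra.
exists i; rewrite !inE ?eqxx // ij /=.
by have := pairpC ij; lra.
Qed.

Lemma kemeny_star_ltE (i j : 'I_n) : i != j -> (ks i < ks j)%N = (1/2 < p i j).
Proof.
move=> ij; apply/idP/idP; last exact: kemeny_star_lt.
apply: contraTT; rewrite -pairp_gt_halfC // -leqNgt => pji.
by rewrite ltnW // kemeny_star_lt // eq_sym.
Qed.

Lemma kemeny_star_inj : injective ks.
Proof.
move=> i j eq_ij; apply/eqP; apply: contraT => ij.
have := pairp_gt_halfC ij.
by rewrite -kemeny_star_ltE 1?eq_sym // -kemeny_star_ltE // eq_ij ltnn.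
Qed.

Lemma kemeny_star_le (i : 'I_n) : (ks i <= n)%N.
Proof.
rewrite kemeny_star_card -[n in (_ <= n)%N]card_ord -cardsT.
apply: proper_card; apply/properP; split; first exact: finset.subsetT.
by exists i; rewrite !inE ?eqxx.
Qed.

Lemma pairp_discordant (i j : 'I_n) : i != j ->
  \sum_(s : 'S_n) P x s * (discordant (ranks s) ks i j)%:R = 1/2 - `|p i j - 1/2|.
Proof.
move=> ij; rewrite /discordant kemeny_star_ltE //; have := pairpC ij.
case: ltP => pij sum1.
  transitivity (p j i); last by rewrite gtr0_norm ?subr_gt0 //; lra.
  by rewrite -pairp_not_lt //; apply: eq_bigr => s _; case: (_ < _)%N.
transitivity (p i j); last by rewrite ler0_norm ?subr_le0 //; lra.
by apply: eq_bigr => s _; case: (_ < _)%N.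
Qed.

Lemma median_permE (i : 'I_n) :
  nat_of_ord (median_perm (lt_half_mx p) i) = ahead_count (lt_half_mx p) i.
Proof.
have val_g (k : 'I_n) : val (insubd k (ahead_count (lt_half_mx p) k)) =
               ahead_count (lt_half_mx p) k.
  by have := kemeny_star_le k; rewrite kemeny_star_lt_half_mx /= add1n val_insubd => ->.
rewrite perm_ofE; first exact: val_g.
move=> k l /(congr1 val); rewrite !val_g => eq_kl.
by apply: kemeny_star_inj; rewrite kemeny_star_lt_half_mx eq_kl.
Qed.

Lemma kendall_median_perm (s : 'S_n) :
  kendall (median_perm (lt_half_mx p)) s = discord (ranks s) ks.
Proof.
rewrite /kendall discordC kemeny_star_lt_half_mx discord_addl.
by congr discord; apply: funext => i; rewrite median_permE.
Qed.
End KemenyMedian.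

Section ConditionalMoments.
Variables (R : realType) (T : Type) (n : nat) (P : T -> 'S_n -> R) (x : T).
Hypothesis P_ge0 : forall s, 0 <= P x s.
Hypothesis P_sum1 : \sum_(s : 'S_n) P x s = 1.
Hypothesis P_T : in_T (pairp P x).
Variable r : T -> 'S_n.
Local Notation p := (pairp P x).
Local Notation ks := (kemeny_star (pairp P x)).
Local Notation c i j := (discordant (ranks (r x)) ks i j).
Local Notation D := ((discord (ranks (r x)) ks)%:R : R).

Lemma ZsE (s : 'S_n) : Zs P r x s = \sum_(i < n) \sum_(j < n | (i < j)%N)
  (c i j)%:R * (1 - 2 * (discordant (ranks s) ks i j)%:R).
Proof.
have ks_inj := kemeny_star_inj P_sum1 P_T.
rewrite /Zs (discordE (ranks_inj s) (ranks_inj (r x))) (discordE (ranks_inj s) ks_inj).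
rewrite !natr_sum -sumrB; apply: eq_bigr => i _.
rewrite !natr_sum -sumrB; apply: eq_bigr => j _; rewrite /discordant.
by case: (s i < s j)%N; case: (r x i < r x j)%N; case: (ks i < ks j)%N => /=; lra.
Qed.

Lemma Zs_abs_le (s : 'S_n) : `|Zs P r x s| <= D.
Proof.
rewrite ZsE (discordE (ranks_inj _) (kemeny_star_inj P_sum1 P_T)) natr_sum.
apply: (le_trans (ler_norm_sum _ _ _)); apply: ler_sum => i _; rewrite natr_sum.
apply: (le_trans (ler_norm_sum _ _ _)); apply: ler_sum => j _.
by case: (c i j); case: (discordant _ _ i j); rewrite /= ler_norml; apply/andP; split; lra.
Qed.

Lemma cond_exp_Zs : cond_exp P (Zs P r) x =
  \sum_(i < n) \sum_(j < n | (i < j)%N) (c i j)%:R * (2 * `|p i j - 1/2|).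
Proof.
rewrite /cond_exp; under eq_bigr do rewrite ZsE mulr_sumr.
rewrite exchange_big; apply: eq_bigr => i _.
under eq_bigr do rewrite mulr_sumr.
rewrite exchange_big; apply: eq_bigr => j /ord_ltn_neq ij.
have -> : 2 * `|p i j - 1/2| =
    1 - 2 * \sum_(s : 'S_n) P x s * (discordant (ranks s) ks i j)%:R.
  by rewrite pairp_discordant //; lra.
rewrite (eq_bigr (fun s => (c i j)%:R * P x s -
    (c i j)%:R * 2 * (P x s * (discordant (ranks s) ks i j)%:R))); last by move=> s _; ring.
by rewrite sumrB -!mulr_sumr P_sum1; ring.
Qed.

Lemma cond_exp_Zs_ge (H : R) : (forall i j : 'I_n, (i < j)%N -> H <= `|p i j - 1/2|) ->
  2 * H * D <= cond_exp P (Zs P r) x.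
Proof.
move=> H_le; rewrite cond_exp_Zs (discordE (ranks_inj _) (kemeny_star_inj P_sum1 P_T)).
rewrite natr_sum mulr_sumr; apply: ler_sum => i _; rewrite natr_sum mulr_sumr.
by apply: ler_sum => j ij; have := H_le _ _ ij; case: (c i j) => /=; lra.
Qed.

Lemma cond_exp_Zs2_le (H : R) : 0 < H ->
  (forall i j : 'I_n, (i < j)%N -> H <= `|p i j - 1/2|) ->
  cond_exp P (fun x s => Zs P r x s ^+ 2) x <=
  (n * (n - 1))%:R / (2 * H) * cond_exp P (Zs P r) x.
Proof.
move=> H_gt0 H_le; have D_ge0 : 0 <= D := ler0n _ _.
have D_le : D <= (n * (n - 1))%:R by rewrite ler_nat discord_le.
have mean_ge := cond_exp_Zs_ge H_le.
apply: (@le_trans _ _ (\sum_(s : 'S_n) P x s * D ^+ 2)); rewrite /cond_exp.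
  apply: ler_sum => s _; apply: ler_wpM2l => //.
  rewrite -real_normK ?num_real // !expr2.
  by apply: ler_pM; rewrite ?normr_ge0 ?Zs_abs_le.
rewrite -mulr_suml P_sum1 mul1r mulrAC ler_pdivlMr ?mulr_gt0 //.
have mean_ge0 : 0 <= cond_exp P (Zs P r) x.
  by apply: le_trans mean_ge; rewrite !mulr_ge0 // ltW.
apply: (@le_trans _ _ (D * cond_exp P (Zs P r) x)); last exact: ler_wpM2r.
by rewrite expr2 -mulrA; apply: ler_wpM2l => //; rewrite mulrC.
Qed.

End ConditionalMoments.

Section FiniteValued.
Context d (T : measurableType d) (U : finType) (q : T -> U).
Hypothesis q_fibers : forall u, measurable (q @^-1` [set u]).

Lemma measurable_preimage_fin (A : set U) : measurable (q @^-1` A).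
Proof.
have -> : q @^-1` A = \bigcup_(u in A) q @^-1` [set u].
  apply/seteqP; split => [t At | t [u Au /= ->]] //.
  by exists (q t).
by apply: fin_bigcup_measurable; first exact: finite_finset.
Qed.

Lemma measurable_fun_fin_comp (R : realType) (f : U -> R) : measurable_fun setT (f \o q).
Proof. by move=> _ Y _; rewrite setTI; exact: (measurable_preimage_fin (f @^-1` Y)). Qed.

End FiniteValued.

Section ConditionalExpectation.
Context d (T : measurableType d) (R : realType) (mu : probability T R).
Variables (n : nat) (P : T -> 'S_n -> R).
Hypothesis P_ge0 : forall x s, 0 <= P x s.
Hypothesis P_sum1 : forall x, \sum_(s : 'S_n) P x s = 1.
Hypothesis P_meas : forall s, measurable_fun setT (fun x => P x s).

Lemma P_le1 x s : P x s <= 1.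
Proof.
by rewrite -(P_sum1 x) (bigD1 s) //= lerDl; apply: sumr_ge0 => t _; exact: P_ge0.
Qed.

Lemma cond_integrable (U : finType) (q : T -> U) (F : U -> 'S_n -> R) :
  (forall u, measurable (q @^-1` [set u])) ->
  mu.-integrable setT (EFin \o cond_exp P (fun x => F (q x))).
Proof.
move=> q_fibers; apply: measurable_bounded_integrable => //.
- by rewrite -ge0_fin_numE ?fin_num_measure.
- apply: measurable_sum => s; apply: measurable_realfun.measurable_funM => //.
  exact: (measurable_fun_fin_comp q_fibers (F^~ s)).
exists (\sum_(s : 'S_n) \sum_(u : U) `|F u s|); split; first exact: num_real.
move=> M M_gt x _ /=; apply: le_trans (ltW M_gt).
apply: (le_trans (ler_norm_sum _ _ _)); apply: ler_sum => s _.
rewrite normrM (bigD1 (q x)) //= (ger0_norm (P_ge0 x s)).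
apply: (@le_trans _ _ `|F (q x) s|); first by rewrite ler_piMl ?P_le1.
by rewrite lerDl; apply: sumr_ge0 => u _.
Qed.

Lemma VarE (f : T -> 'S_n -> R) :
  mu.-integrable setT (EFin \o cond_exp P f) ->
  mu.-integrable setT (EFin \o cond_exp P (fun x s => f x s ^+ 2)) ->
  Var mu P f = Exp mu P (fun x s => f x s ^+ 2) - Exp mu P f ^+ 2.
Proof.
move=> int_f int_f2; rewrite /Var; set m := Exp mu P f.
have int_mf : mu.-integrable setT (EFin \o (fun x => 2 * m * cond_exp P f x)).
  by apply: eq_integrable (integrableZl measurableT (2 * m) int_f) => // x _.
have int_diff : mu.-integrable setT
    (EFin \o (fun x => cond_exp P (fun x s => f x s ^+ 2) x - 2 * m * cond_exp P f x)).
  by apply: eq_integrable (integrableB measurableT int_f2 int_mf) => // x _.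
have mu_setT : fine (mu [set: T]) = 1 by rewrite probability_setT.
rewrite [LHS](@eq_Rintegral _ _ _ mu setT (fun x =>
    (cond_exp P (fun x s => f x s ^+ 2) x - 2 * m * cond_exp P f x) + m ^+ 2)).
  rewrite RintegralD ?finite_measure_integrable_cst // RintegralB // RintegralZl //.
  rewrite Rintegral_cst // mu_setT mulr1 -[\int[mu]_x cond_exp P f x]/m.
  by rewrite -[\int[mu]_x cond_exp P _ x]/(Exp mu P _); ring.
move=> x _; have -> : m ^+ 2 = \sum_(s : 'S_n) P x s * m ^+ 2.
  by rewrite -mulr_suml P_sum1 mul1r.
rewrite /cond_exp mulr_sumr -sumrB -big_split /=.
by apply: eq_bigr => s _; ring.
Qed.

End ConditionalExpectation.

Section RankingRisk.
Context d (T : measurableType d) (R : realType) (mu : probability T R).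
Variables (n : nat) (P : T -> 'S_n -> R).
Hypothesis P_ge0 : forall x s, 0 <= P x s.
Hypothesis P_sum1 : forall x, \sum_(s : 'S_n) P x s = 1.
Hypothesis P_meas : forall s, measurable_fun setT (fun x => P x s).
Hypothesis P_T : forall x, in_T (pairp P x).

Lemma Hmargin_le x (i j : 'I_n) : (i < j)%N -> Hmargin P <= `|pairp P x i j - 1/2|.
Proof.
move=> ij; apply: ge_inf; last by exists x, i, j.
by exists 0 => _ [y [k [l [_ ->]]]].
Qed.

Lemma measurable_pairp (i j : 'I_n) : measurable_fun setT (fun x => pairp P x i j).
Proof. by apply: measurable_sum => s; apply: measurable_realfun.measurable_funM. Qed.

Lemma lt_half_mx_fibers (B : {ffun 'I_n * 'I_n -> bool}) :
  measurable ((fun x => lt_half_mx (pairp P x)) @^-1` [set B]).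
Proof.
have -> : (fun x => lt_half_mx (pairp P x)) @^-1` [set B] =
    \bigcap_(ik in [set: 'I_n * 'I_n]) [set x | (pairp P x ik.1 ik.2 < 1/2) = B ik].
  apply/seteqP; split => x /=; first by move=> <- ik _; rewrite ffunE.
  by move=> eqB; apply/ffunP => ik; rewrite ffunE eqB.
apply: fin_bigcap_measurable; first exact: finite_finset.
move=> [i k] _; rewrite -[X in measurable X]setTI.
have mB : measurable [set B (i, k)] by [].
exact: (measurable_realfun.measurable_fun_ltr (measurable_pairp i k)
  (measurable_cst (1/2 : R)) measurableT mB).
Qed.

Lemma measurable_median_rule : measurable_rule (median_rule P).
Proof.
move=> s.
exact: (measurable_preimage_fin lt_half_mx_fibers (@median_perm n @^-1` [set s])).
Qed.

Lemma integrable_risk (r : T -> 'S_n) : measurable_rule r ->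
  mu.-integrable setT (EFin \o cond_exp P (fun x s => (kendall (r x) s)%:R)).
Proof. exact: (cond_integrable mu P_ge0 P_sum1 P_meas (fun u s => (kendall u s)%:R)). Qed.

Lemma risk_star_le (r : T -> 'S_n) : measurable_rule r -> risk_star mu P <= risk mu P r.
Proof.
move=> r_meas; apply: ge_inf; last by exists r.
exists 0 => _ [r' _ <-]; apply: Rintegral_ge0 => x _.
by apply: sumr_ge0 => s _; rewrite mulr_ge0.
Qed.

Variable r : T -> 'S_n.
Hypothesis r_meas : measurable_rule r.

Lemma Zs_kendall x s :
  Zs P r x s = (kendall (r x) s)%:R - (kendall (median_rule P x) s)%:R.
Proof.
by rewrite /median_rule (kendall_median_perm (P_sum1 x) (P_T x)) /kendall discordC.
Qed.

Lemma integrable_cond_exp_Zs (G : R -> R) :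
  mu.-integrable setT (EFin \o cond_exp P (fun x s => G (Zs P r x s))).
Proof.
have pair_fibers u : measurable ((fun x => (r x, median_rule P x)) @^-1` [set u]).
  case: u => s t.
  have -> : (fun x => (r x, median_rule P x)) @^-1` [set (s, t)] =
      r @^-1` [set s] `&` median_rule P @^-1` [set t].
    by apply/seteqP; split => x /=; case=> -> ->.
  exact: measurableI (r_meas s) (measurable_median_rule t).
apply: eq_integrable (cond_integrable mu P_ge0 P_sum1 P_meas
  (fun u s => G ((kendall u.1 s)%:R - (kendall u.2 s)%:R)) pair_fibers) => // x _.
by congr EFin; apply: eq_bigr => s _; rewrite Zs_kendall.
Qed.

Lemma Exp_Zs : Exp mu P (Zs P r) = risk mu P r - risk mu P (median_rule P).
Proof.
rewrite /risk /Exp -RintegralB //.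
- apply: eq_Rintegral => x _; rewrite -sumrB; apply: eq_bigr => s _.
  by rewrite Zs_kendall mulrBr.
- exact: integrable_risk.
- exact: integrable_risk measurable_median_rule.
Qed.

Hypothesis H_pos : 0 < Hmargin P.

Lemma Exp_Zs2_le : Exp mu P (fun x s => Zs P r x s ^+ 2) <=
  (n * (n - 1))%:R / (2 * Hmargin P) * Exp mu P (Zs P r).
Proof.
rewrite /Exp -RintegralZl //; last exact: (integrable_cond_exp_Zs id).
apply: le_Rintegral => //.
- exact: (integrable_cond_exp_Zs (fun z => z ^+ 2)).
- exact: eq_integrable (integrableZl measurableT _ (integrable_cond_exp_Zs id)).
- move=> x _.
  exact: (cond_exp_Zs2_le (P_ge0 x) (P_sum1 x) (P_T x) r H_pos (Hmargin_le x)).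
Qed.

End RankingRisk.

Theorem lemma16 (d : measure_display) (T : measurableType d) (R : realType)
  (n : nat) (mu : probability T R) (P : T -> 'S_n -> R)
  (P_ge0 : forall x s, 0 <= P x s)
  (P_sum1 : forall x, \sum_(s : 'S_n) P x s = 1)
  (P_meas : forall s, measurable_fun setT (fun x => P x s))
  (P_T : forall x, in_T (pairp P x))
  (H_pos : 0 < Hmargin P)
  (r : T -> 'S_n) (r_meas : measurable_rule r) :
  Var mu P (Zs P r) <=
    ((n * (n - 1))%:R / (2 * Hmargin P)) * (risk mu P r - risk_star mu P).
Proof.
have Zs_int := integrable_cond_exp_Zs mu P_ge0 P_sum1 P_meas P_T r_meas.
rewrite (VarE P_sum1 (Zs_int id) (Zs_int (fun z => z ^+ 2))).
apply: (@le_trans _ _ (Exp mu P (fun x s => Zs P r x s ^+ 2))).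
  by rewrite gerBl sqr_ge0.
apply: (le_trans (Exp_Zs2_le mu P_ge0 P_sum1 P_meas P_T r_meas H_pos)).
rewrite (Exp_Zs mu P_ge0 P_sum1 P_meas P_T r_meas).
apply: ler_wpM2l; first by rewrite divr_ge0 // mulr_ge0 // ltW.
by apply: lerB => //; apply: (risk_star_le mu P_ge0 (measurable_median_rule P_meas)).
Qed.
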